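(* Let $K$ be a real compact nc convex set. Then the real operator system $A(K)$ has trivial involution ($f^*=f$ for all $f\in A(K)$) if and only if $K$ is symmetric. Equivalently, a real operator system $V$ has trivial involution if and only if $\varphi(v)^{\mathsf T}=\varphi(v)$ for every $n$, every $\varphi\in\mathrm{UCP}(V,M_n(\mathbb{R}))$ and every $v\in V$.
   Context: A real compact nc convex set $K$ over a real dual operator space $E$ is a graded set $K=\bigsqcup_nK_n$, $K_n\subseteq M_n(E)$ weak$^*$ compact, closed under direct sums $\sum\alpha_ix_i\alpha_i^{\mathsf T}$ and compressions $\beta^{\mathsf T}x\beta$ by real isometries. $K$ is called symmetric if every $k=[k_{ij}]\in K_n$ satisfies $k^{\mathsf T}=k$, i.e. $k_{ji}=k_{ij}$ for all $i,j$. $A(K)$ is the real operator system of continuous nc affine maps $K\to\bigsqcup_nM_n(\mathbb{R})$ with involution $f^*(k)=f(k)^{\mathsf T}$, cones $M_n(A(K))^+=\{[f_{ij}]:[f_{ij}(k)]\ge0\ \forall k\}$ and unit the constant $1$. Every real compact nc convex set $K$ is nc affinely homeomorphic to $\mathrm{ncS}(A(K))=\bigsqcup_n\mathrm{UCP}(A(K),M_n(\mathbb{R}))$ via $k\mapsto(f\mapsto f(k))$. *)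

From HB Require Import structures.
From mathcomp Require Import all_boot all_order all_algebra.
From mathcomp Require Import reals.
Set Implicit Arguments. Unset Strict Implicit. Unset Printing Implicit Defensive.
Import Order.TTheory GRing.Theory Num.Theory.
Local Open Scope ring_scope.

Section RealNC.
Variable R : realType.

Definition mxcomp (V : lmodType R) (m n p q : nat)
  (a : 'M[R]_(m, n)) (x : 'M[V]_(n, p)) (b : 'M[R]_(p, q)) : 'M[V]_(m, q) :=
  \matrix_(i, j) \sum_(k < n) \sum_(l < p) (a i k * b l j) *: x k l.

Definition isometry (m n : nat) (b : 'M[R]_(m, n)) : Prop := b^T *m b = 1%:M.

Definition psd (n : nat) (A : 'M[R]_n) : Prop :=
  A^T = A /\ forall x : 'cV[R]_n, 0 <= (x^T *m A *m x) 0 0.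

(* the block matrix [B i j] in M_m(M_n(R)) is positive semidefinite
   (written out entrywise) *)
Definition block_psd (m n : nat) (B : 'I_m -> 'I_m -> 'M[R]_n) : Prop :=
  (forall i j, (B i j)^T = B j i) /\
  forall xi : 'I_m -> 'cV[R]_n,
    0 <= \sum_(i < m) \sum_(j < m) ((xi i)^T *m B i j *m xi j) 0 0.

Definition unit_mx (V : lmodType R) (e : V) (n : nat) : 'M[V]_n :=
  \matrix_(i, j) (if i == j then e else 0).

Definition sa_mx (V : lmodType R) (inv : V -> V) (n : nat) (x : 'M[V]_n) : Prop :=
  (map_mx inv x)^T = x.

Definition real_opsys (V : lmodType R) (inv : V -> V)
  (cone : forall n, 'M[V]_n -> Prop) (e : V) : Prop :=
  [/\ (forall (a : R) (u v : V), inv (a *: u + v) = a *: inv u + inv v),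
      (forall v, inv (inv v) = v),
      (forall n x, cone n x -> sa_mx inv x),
      (forall n x y, cone n x -> cone n y -> cone n (x + y))
    & (forall n (r : R) x, 0 <= r -> cone n x -> cone n (map_mx (fun v => r *: v) x))] /\
  [/\ (forall n x, cone n x -> cone n (- x) -> x = 0),
      (forall m n (a : 'M[R]_(n, m)) x, cone n x -> cone m (mxcomp a^T x a)),
      (forall n x, sa_mx inv x -> exists r : R, 0 < r /\ cone n (unit_mx (r *: e) n + x))
    & (forall n x, sa_mx inv x ->
         (forall r : R, 0 < r -> cone n (unit_mx (r *: e) n + x)) -> cone n x)].

Definition ucp (V : lmodType R) (cone : forall n, 'M[V]_n -> Prop) (e : V)
  (n : nat) (phi : V -> 'M[R]_n) : Prop :=
  [/\ (forall (a : R) (u v : V), phi (a *: u + v) = a *: phi u + phi v),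
      phi e = 1%:M
    & (forall m (x : 'M[V]_m), cone m x -> block_psd (fun i j => phi (x i j)))].

Definition trivial_involution (V : lmodType R) (inv : V -> V) : Prop :=
  forall v, inv v = v.

(* pair : E_* x E -> R exhibits E as the dual of E_*; the weak* topology on E
   is sigma(E, E_* ), and on M_n(E) it is the entrywise (product) topology. *)
Definition dual_pairing (E F : lmodType R) (pair : F -> E -> R) : Prop :=
  [/\ (forall w (a : R) x y, pair w (a *: x + y) = a * pair w x + pair w y),
      (forall x (a : R) w v, pair (a *: w + v) x = a * pair w x + pair v x)
    & (forall x, (forall w, pair w x = 0) -> x = 0)].

Definition wnbhd (E F : lmodType R) (pair : F -> E -> R) (n : nat)
  (x : 'M[E]_n) (L : seq (F * 'I_n * 'I_n)) (d : R) : 'M[E]_n -> Prop :=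
  fun y => forall t, t \in L -> `|pair t.1.1 (y t.1.2 t.2 - x t.1.2 t.2)| < d.

Definition wopen (E F : lmodType R) (pair : F -> E -> R) (n : nat)
  (U : 'M[E]_n -> Prop) : Prop :=
  forall x, U x -> exists L d, 0 < d /\ forall y, wnbhd pair x L d y -> U y.

Definition wcompact (E F : lmodType R) (pair : F -> E -> R) (n : nat)
  (S : 'M[E]_n -> Prop) : Prop :=
  forall (I : Type) (U : I -> 'M[E]_n -> Prop),
    (forall i, wopen pair (U i)) -> (forall x, S x -> exists i, U i x) ->
    exists (p : nat) (g : 'I_p -> I), forall x, S x -> exists k, U (g k) x.

Definition nc_convex (E : lmodType R) (K : forall n, 'M[E]_n -> Prop) : Prop :=
  (forall n p (ns : 'I_p -> nat) (x : forall i, 'M[E]_(ns i))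
          (a : forall i, 'M[R]_(n, ns i)),
     (forall i, K (ns i) (x i)) -> (forall i, isometry (a i)) ->
     \sum_(i < p) a i *m (a i)^T = 1%:M ->
     K n (\sum_(i < p) mxcomp (a i) (x i) (a i)^T))
  /\ (forall m n (b : 'M[R]_(n, m)) x, isometry b -> K n x -> K m (mxcomp b^T x b)).

Definition compact_nc_convex (E F : lmodType R) (pair : F -> E -> R)
  (K : forall n, 'M[E]_n -> Prop) : Prop :=
  nc_convex K /\ forall n, wcompact pair (K n).

Definition nc_symmetric (E : lmodType R) (K : forall n, 'M[E]_n -> Prop) : Prop :=
  forall n k, K n k -> k^T = k.

Definition nc_affine (E : lmodType R) (K : forall n, 'M[E]_n -> Prop)
  (f : forall n, 'M[E]_n -> 'M[R]_n) : Prop :=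
  (forall n p (ns : 'I_p -> nat) (x : forall i, 'M[E]_(ns i))
          (a : forall i, 'M[R]_(n, ns i)),
     (forall i, K (ns i) (x i)) -> (forall i, isometry (a i)) ->
     \sum_(i < p) a i *m (a i)^T = 1%:M ->
     f n (\sum_(i < p) mxcomp (a i) (x i) (a i)^T) =
       \sum_(i < p) a i *m f (ns i) (x i) *m (a i)^T)
  /\ (forall m n (b : 'M[R]_(n, m)) x, isometry b -> K n x ->
        f m (mxcomp b^T x b) = b^T *m f n x *m b).

Definition wcontinuous_on (E F : lmodType R) (pair : F -> E -> R)
  (K : forall n, 'M[E]_n -> Prop) (f : forall n, 'M[E]_n -> 'M[R]_n) : Prop :=
  forall n x, K n x -> forall eps : R, 0 < eps ->
    exists L d, 0 < d /\ forall y, K n y -> wnbhd pair x L d y ->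
      forall i j, `|f n y i j - f n x i j| < eps.

Definition in_AK (E F : lmodType R) (pair : F -> E -> R)
  (K : forall n, 'M[E]_n -> Prop) (f : forall n, 'M[E]_n -> 'M[R]_n) : Prop :=
  nc_affine K f /\ wcontinuous_on pair K f.

(* A(K) has trivial involution: f^* = f for every f in A(K),
   where f^*(k) = f(k)^T (equality as functions on K) *)
Definition AK_trivial_involution (E F : lmodType R) (pair : F -> E -> R)
  (K : forall n, 'M[E]_n -> Prop) : Prop :=
  forall f, in_AK pair K f -> forall n k, K n k -> (f n k)^T = f n k.

End RealNC.

From Pilot Require Import Defs.
From HB Require Import structures.
From mathcomp Require Import all_boot all_order all_algebra.
From mathcomp Require Import reals.
From mathcomp Require Import boolp classical_sets ring lra.
Set Implicit Arguments. Unset Strict Implicit. Unset Printing Implicit Defensive.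
Import Order.TTheory GRing.Theory Num.Theory.
Local Open Scope ring_scope.

(* If K is symmetric and f is in A(K), compress a point of K_n to two
   coordinates i, j, take its direct sum with itself and compress back to M_2 by
   an isometry chosen so that the result is diagonal.  A diagonal point is fixed
   by conjugation with diag(1, -1), and so is its image under f; this forces the
   off-diagonal entry (f_ij - f_ji)/2 of that image to vanish.  Conversely, the
   entrywise pairings with the predual lie in A(K) and separate the points of E.

   If an operator system has w^* = -w <> 0, the Archimedean property yields
   t > 0 such that [[t e, w], [-w, t e]] is not positive.  The functional
   a + d + b t on the matrices [[a e, g e + b w], [g e - b w, d e]] is then
   positive for the cone of elements of M_2(V) with positive self-adjoint part;
   the M. Riesz extension theorem extends it to a positive functional s on
   M_2(V), and v |-> [s(E_ij (x) v)]_ij is a UCP map V -> M_2(R) whose value at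
   w is not symmetric. *)

Section RieszExtension.
Local Open Scope classical_set_scope.
Variables (R : realType) (W : lmodType R) (P : W -> Prop).
Hypothesis PD : forall x y, P x -> P y -> P (x + y).
Hypothesis PZ : forall r x, 0 <= r -> P x -> P (r *: x).
Hypothesis P0 : P 0.
Variable u : W.
Hypothesis u_unit : forall x, exists r, P (r *: u - x).

(* Partial functionals are represented by their graphs, so that the union of a
   chain of extensions is again one. *)
Definition graph_linear (G : set (W * R)) :=
  forall x a y b k, G (x, a) -> G (y, b) -> G (k *: x + y, k * a + b).
Definition graph_positive (G : set (W * R)) := forall x a, G (x, a) -> P x -> 0 <= a.

Variable G0 : set (W * R).
Hypothesis G0_linear : graph_linear G0.
Hypothesis G0_positive : graph_positive G0.
Variable gu : R.
Hypothesis G0_unit : G0 (u, gu).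

Lemma graph_linear0 G : graph_linear G -> G (u, gu) -> G (0, 0).
Proof.
move=> Gl Gu; have := Gl _ _ _ _ (-1) Gu Gu.
by rewrite scaleN1r mulN1r !addNr.
Qed.

Lemma graph_monotone G x a y b : graph_linear G -> graph_positive G ->
  G (x, a) -> G (y, b) -> P (y - x) -> a <= b.
Proof.
move=> Gl Gp Ga Gb Pyx; have := Gp _ _ (Gl _ _ _ _ (-1) Ga Gb).
by rewrite scaleN1r mulN1r addrC (addrC (-a)) subr_ge0; apply.
Qed.

Lemma graph_functional G x a b : graph_linear G -> graph_positive G ->
  G (x, a) -> G (x, b) -> a = b.
Proof.
move=> Gl Gp Ga Gb; have Px0 : P (x - x) by rewrite subrr.
by apply/eqP; rewrite eq_le (graph_monotone Gl Gp Ga Gb) ?(graph_monotone Gl Gp Gb Ga).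
Qed.

(* The alternative [G = set0] makes the union of the empty chain admissible. *)
Definition admissible (G : set (W * R)) :=
  [/\ graph_linear G, graph_positive G & G0 `<=` G \/ G = set0].

Lemma admissible_bigcup (F : set (set (W * R))) :
  F `<=` admissible -> total_on F subset -> admissible (\bigcup_(X in F) X).
Proof.
move=> FA Ftot; split.
- move=> x a y b k [X FX Xa] [Y FY Yb].
  have [XY|YX] := Ftot _ _ FX FY.
  + by exists Y => //; have [Yl _ _] := FA _ FY; exact: Yl (XY _ Xa) Yb.
  + by exists X => //; have [Xl _ _] := FA _ FX; exact: Xl Xa (YX _ Yb).
- by move=> x a [X FX Xa]; have [_ Xp _] := FA _ FX; exact: Xp Xa.
- have [[X [FX Xne]]|nX] := pselect (exists X, F X /\ X <> set0).
  + left; have [_ _ [XG0|//]] := FA _ FX.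
    by move=> p G0p; exists X => //; exact: XG0.
  + right; apply/seteqP; split => // p [X FX Xp].
    by apply: nX; exists X; split => // X0; rewrite X0 in Xp.
Qed.

Section OneStepExtension.
Variable A : set (W * R).
Hypothesis A_linear : graph_linear A.
Hypothesis A_positive : graph_positive A.
Hypothesis G0A : G0 `<=` A.
Variable v : W.

Let A00 : A (0, 0). Proof. exact: graph_linear0 A_linear (G0A G0_unit). Qed.

Let below_v := [set a | exists d, A (d, a) /\ P (v - d)].

Let below_v_le y b : A (y, b) -> P (y - v) -> ubound below_v b.
Proof.
move=> Ayb Pyv a [d [Ada Pvd]]; apply: (graph_monotone A_linear A_positive Ada Ayb).
have -> : y - d = (y - v) + (v - d) by rewrite addrA subrK.
exact: PD.
Qed.

Let below_v_has_sup : has_sup below_v.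
Proof.
split.
  have [r Pr] := u_unit (- v); exists (- r * gu + 0), (- r *: u + 0).
  split; first exact: A_linear (G0A G0_unit) A00.
  by rewrite addr0 scaleNr opprK addrC; rewrite opprK in Pr.
have [r Pr] := u_unit v; exists (r * gu + 0).
apply: (below_v_le (y := r *: u + 0)); first exact: A_linear (G0A G0_unit) A00.
by rewrite addr0.
Qed.

Definition step_value := sup below_v.

Definition graph_extend :=
  [set p | exists d a l, A (d, a) /\ p = (d + l *: v, a + l * step_value)].

Lemma graph_extend_linear : graph_linear graph_extend.
Proof.
move=> x a y b k [d [a' [l [Ada [-> ->]]]]] [d2 [a2 [l2 [Ada2 [-> ->]]]]].
exists (k *: d + d2), (k * a' + a2), (k * l + l2); split; first exact: A_linear.
congr (_, _).
- by rewrite scalerDr scalerA addrACA scalerDl.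
- by rewrite mulrDr mulrA addrACA mulrDl.
Qed.

Lemma graph_extend_positive : graph_positive graph_extend.
Proof.
move=> x a [d [a' [l [Ada [-> ->]]]]] Px.
have [lgt|lle] := ltrP 0 l.
- have Ad : A (- l^-1 *: d + 0, - l^-1 * a' + 0) by exact: A_linear.
  rewrite !addr0 in Ad.
  have inS : below_v (- l^-1 * a').
    exists (- l^-1 *: d); split => //.
    have -> : v - - l^-1 *: d = l^-1 *: (d + l *: v).
      by rewrite scaleNr opprK scalerDr scalerA mulVf ?scale1r 1?addrC ?gt_eqF.
    by apply: PZ => //; rewrite invr_ge0 ltW.
  have := sup_upper_bound below_v_has_sup inS; rewrite -/step_value => h.
  have : 0 <= l * (step_value + l^-1 * a').
    by apply: mulr_ge0; [exact: ltW | rewrite -(opprK (l^-1 * a')) subr_ge0 -mulNr].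
  by rewrite mulrDr mulrA mulfV ?mul1r ?gt_eqF // addrC.
have [l0|lneq] := eqVneq l 0.
  by rewrite l0 mul0r addr0; apply: (A_positive Ada); rewrite l0 scale0r addr0 in Px.
have mgt : 0 < - l by rewrite oppr_gt0 lt_neqAle lneq lle.
have Ad : A ((- l)^-1 *: d + 0, (- l)^-1 * a' + 0) by exact: A_linear.
rewrite !addr0 in Ad.
have Pdv : P ((- l)^-1 *: d - v).
  have -> : (- l)^-1 *: d - v = (- l)^-1 *: (d + l *: v).
    by rewrite scalerDr scalerA invrN mulNr mulVf // scaleN1r.
  by apply: PZ => //; rewrite invr_ge0 ltW.
have := ge_sup (proj1 below_v_has_sup) (below_v_le Ad Pdv); rewrite -/step_value => h.
have : 0 <= - l * ((- l)^-1 * a' - step_value).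
  by apply: mulr_ge0; [exact: ltW | rewrite subr_ge0].
by rewrite mulrBr mulrA mulfV ?mul1r ?gt_eqF // mulNr opprK.
Qed.

End OneStepExtension.

Theorem riesz_extension : exists s : W -> R,
  [/\ forall k x y, s (k *: x + y) = k * s x + s y,
      forall x, P x -> 0 <= s x
    & forall x a, G0 (x, a) -> s x = a].
Proof.
have [A [[Al Ap AG] Amax]] := Zorn_bigcup admissible_bigcup.
have G0A : G0 `<=` A.
  case: AG => // A0; exfalso; apply: (Amax G0); last by split => //; left.
  rewrite A0; split => //; move=> /(_ (0, 0)) h; apply: h; exact: graph_linear0.
have A_total x : exists a, A (x, a).
  apply: contrapT => nx; apply: (Amax (graph_extend A x)); last first.
    split; [exact: graph_extend_linear | exact: graph_extend_positive | left].
    by move=> [d a] /G0A Ada; exists d, a, 0; rewrite scale0r mul0r !addr0.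
  split; first by move=> [d a] Ada; exists d, a, 0; rewrite scale0r mul0r !addr0.
  move=> /(_ (x, step_value A x)) h; apply: nx; exists (step_value A x); apply: h.
  exists 0, 0, 1; split; first exact: G0A (graph_linear0 G0_linear G0_unit).
  by rewrite scale1r mul1r !add0r.
have [s sA] := choice A_total.
exists s; split.
- by move=> k x y; apply: (graph_functional Al Ap (sA _)); exact: Al.
- by move=> x Px; exact: Ap (sA x) Px.
- by move=> x a /G0A; exact: graph_functional Al Ap (sA x).
Qed.

End RieszExtension.

Section LinearForms.
Variables (R : realType) (E : lmodType R) (h : E -> R).
Hypothesis h_linear : forall (a : R) x y, h (a *: x + y) = a * h x + h y.
HB.instance Definition _ := GRing.isLinear.Build R E R *%R h h_linear.

Lemma lformD x y : h (x + y) = h x + h y. Proof. exact: raddfD. Qed.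
Lemma lformN x : h (- x) = - h x. Proof. exact: raddfN. Qed.
Lemma lformB x y : h (x - y) = h x - h y. Proof. exact: raddfB. Qed.
Lemma lformZ a x : h (a *: x) = a * h x. Proof. exact: linearZ. Qed.
Lemma lform_sum (I : Type) (r : seq I) (Q : pred I) (F : I -> E) :
  h (\sum_(i <- r | Q i) F i) = \sum_(i <- r | Q i) h (F i).
Proof. exact: raddf_sum. Qed.

Lemma map_lform_sum m n (I : finType) (F : I -> 'M[E]_(m, n)) :
  map_mx h (\sum_i F i) = \sum_i map_mx h (F i).
Proof.
apply/matrixP => i j; rewrite !mxE summxE raddf_sum summxE.
by apply: eq_bigr => k _; rewrite mxE.
Qed.

Lemma map_lform_mxcomp m n p q (a : 'M[R]_(m, n)) (x : 'M[E]_(n, p)) (b : 'M[R]_(p, q)) :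
  map_mx h (mxcomp a x b) = a *m map_mx h x *m b.
Proof.
apply/matrixP => i j; rewrite !mxE raddf_sum.
under eq_bigr do rewrite raddf_sum.
under [RHS]eq_bigr do rewrite mxE big_distrl.
rewrite [RHS]exchange_big /=; apply: eq_bigr => k _; apply: eq_bigr => l _.
by rewrite linearZ !mxE /=; ring.
Qed.

End LinearForms.

Section TwoByTwo.
Variable R : realType.

Definition matrix2 (T : Type) (a b c d : T) : 'M[T]_2 :=
  \matrix_(i, j) if i == ord0 then (if j == ord0 then a else b)
                 else (if j == ord0 then c else d).

Lemma big_ord2 (M : nmodType) (F : 'I_2 -> M) : \sum_(i < 2) F i = F ord0 + F ord_max.
Proof. by rewrite !big_ord_recl big_ord0 addr0; congr (_ + F _); apply/val_inj. Qed.

Lemma ord2P (i : 'I_2) : i = ord0 \/ i = ord_max.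
Proof. by case: i => [[|[|k]] Hi]; [left|right|]; try apply/val_inj. Qed.

Lemma matrix2P (M : nmodType) (x y : 'M[M]_2) :
  x ord0 ord0 = y ord0 ord0 -> x ord0 ord_max = y ord0 ord_max ->
  x ord_max ord0 = y ord_max ord0 -> x ord_max ord_max = y ord_max ord_max -> x = y.
Proof.
move=> h00 h01 h10 h11; apply/matrixP => i j.
by case: (ord2P i) => ->; case: (ord2P j) => ->.
Qed.

Lemma eq_matrix2 (M : nmodType) (x : 'M[M]_2) a b c d :
  x ord0 ord0 = a -> x ord0 ord_max = b -> x ord_max ord0 = c -> x ord_max ord_max = d ->
  x = matrix2 a b c d.
Proof. by move=> *; apply: matrix2P; rewrite mxE. Qed.

Lemma trmx_mul_mul2E (P M Q : 'M[R]_2) i j :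
  (P^T *m M *m Q) i j =
    P ord0 i * M ord0 ord0 * Q ord0 j + P ord0 i * M ord0 ord_max * Q ord_max j
  + P ord_max i * M ord_max ord0 * Q ord0 j + P ord_max i * M ord_max ord_max * Q ord_max j.
Proof. by rewrite !mxE !big_ord2 !mxE !big_ord2 !mxE; ring. Qed.

Definition sign_mx : 'M[R]_2 := matrix2 1 0 0 (-1).
Definition rot90_mx : 'M[R]_2 := matrix2 0 1 (-1) 0.

(* [mixA^T M mixA + mixB^T M mixB] keeps only the antisymmetric part of the
   off-diagonal of [M], see [mix_offdiag]. *)
Definition mixA : 'M[R]_2 := matrix2 2^-1 2^-1 (- 2^-1) 2^-1.
Definition mixB : 'M[R]_2 := matrix2 2^-1 (- 2^-1) 2^-1 2^-1.

Lemma sign_mx_iso : Defs.isometry sign_mx.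
Proof. by apply: matrix2P; rewrite !mxE !big_ord2 !mxE /=; field. Qed.

Lemma mix_iso : mixA^T *m mixA + mixB^T *m mixB = 1%:M.
Proof. by apply: matrix2P; rewrite !mxE !big_ord2 !mxE /=; field. Qed.

Lemma mix_offdiag (M : 'M[R]_2) :
  (mixA^T *m M *m mixA + mixB^T *m M *m mixB) ord0 ord_max = 2^-1 * (M ord0 ord_max - M ord_max ord0)
  /\ (mixA^T *m M *m mixA + mixB^T *m M *m mixB) ord_max ord0 = 2^-1 * (M ord_max ord0 - M ord0 ord_max).
Proof. by split; rewrite mxE !trmx_mul_mul2E !mxE /=; field. Qed.

Lemma sign_mx_diag (N : 'M[R]_2) :
  N ord0 ord_max = 0 -> N ord_max ord0 = 0 -> sign_mx^T *m N *m sign_mx = N.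
Proof. by move=> h01 h10; apply: matrix2P; rewrite !trmx_mul_mul2E !mxE /= ?h01 ?h10; ring. Qed.

Lemma sign_mx_fixed (N : 'M[R]_2) : N = sign_mx^T *m N *m sign_mx -> N ord0 ord_max = 0.
Proof.
move=> h; have : N ord0 ord_max = (sign_mx^T *m N *m sign_mx) ord0 ord_max by rewrite -h.
by rewrite trmx_mul_mul2E !mxE /=; lra.
Qed.

End TwoByTwo.

Section NcConvexSymmetric.
Variables (R : realType) (E F : lmodType R) (pair : F -> E -> R).
Variable K : forall n, 'M[E]_n -> Prop.
Arguments K : clear implicits.
Hypothesis pairing : dual_pairing pair.

Lemma pairing_separates_mx m n (x y : 'M[E]_(m, n)) :
  (forall w, map_mx (pair w) x = map_mx (pair w) y) -> x = y.
Proof.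
have [pl _ psep] := pairing; move=> h; apply/matrixP => i j; apply/eqP.
rewrite -subr_eq0; apply/eqP/psep => w; rewrite (lformB (pl w)).
by have := congr1 (fun M : 'M_(m, n) => M i j) (h w); rewrite !mxE => ->; rewrite subrr.
Qed.

Lemma pairing_in_AK w : in_AK pair K (fun m (x : 'M[E]_m) => map_mx (pair w) x).
Proof.
have [pl _ _] := pairing; split; [split|].
- move=> m p ns x a _ _ _; rewrite (map_lform_sum (pl w)).
  by apply: eq_bigr => i _; rewrite (map_lform_mxcomp (pl w)).
- by move=> m n b x _ _; rewrite (map_lform_mxcomp (pl w)).
- move=> m x _ eps eps0; exists [seq (w, ij.1, ij.2) | ij : 'I_m * 'I_m], eps.
  split=> // y _ hy i j; rewrite !mxE -(lformB (pl w)).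
  by apply: (hy (w, i, j)); apply/mapP; exists (i, j); rewrite ?mem_enum.
Qed.

Lemma nc_symmetric_of_AK_trivial_involution :
  AK_trivial_involution pair K -> nc_symmetric K.
Proof.
move=> triv n k Kk; apply: pairing_separates_mx => w.
by rewrite -map_trmx (triv _ (pairing_in_AK w) n k Kk).
Qed.

Definition coord_mx n m (g : 'I_m -> 'I_n) : 'M[R]_(n, m) := \matrix_(r, s) (r == g s)%:R.

Lemma sum_coord n (u : 'I_n) (G : 'I_n -> R) : \sum_(r < n) (r == u)%:R * G r = G u.
Proof.
by rewrite (bigD1 u) //= eqxx mul1r big1 ?addr0 // => r /negbTE ->; rewrite mul0r.
Qed.

Lemma coord_mx_iso n m (g : 'I_m -> 'I_n) : injective g -> Defs.isometry (coord_mx g).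
Proof.
move=> g_inj; apply/matrixP => s t; rewrite !mxE.
by under eq_bigr do rewrite !mxE; rewrite sum_coord (inj_eq g_inj) eq_sym.
Qed.

Lemma coord_mx_compressE n m (g : 'I_m -> 'I_n) (M : 'M[R]_n) s t :
  ((coord_mx g)^T *m M *m coord_mx g) s t = M (g s) (g t).
Proof.
rewrite !mxE; under eq_bigr do rewrite !mxE mulrC.
by rewrite sum_coord; under eq_bigr do rewrite !mxE; rewrite sum_coord.
Qed.

Definition block_inj (t : 'I_2) : 'M[R]_(2 + 2, 2) :=
  if t == ord0 then col_mx 1%:M 0 else col_mx 0 1%:M.
Definition mix_mx : 'M[R]_(2 + 2, 2) := col_mx (mixA R) (mixB R).

Lemma block_inj_iso t : Defs.isometry (block_inj t).
Proof.
rewrite /Defs.isometry /block_inj; case: ifP => _;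
by rewrite tr_col_mx mul_row_col !trmx0 !trmx1 !mul0mx !mul1mx ?addr0 ?add0r.
Qed.

Lemma block_inj_partition : \sum_(t < 2) block_inj t *m (block_inj t)^T = 1%:M.
Proof.
rewrite big_ord2 /block_inj /= !tr_col_mx !mul_col_row !trmx0 !trmx1.
by rewrite ?mul1mx ?mul0mx ?mulmx0 ?mulmx1 add_block_mx !addr0 !add0r -scalar_mx_block.
Qed.

Lemma mix_mx_iso : Defs.isometry mix_mx.
Proof. by rewrite /Defs.isometry /mix_mx tr_col_mx mul_row_col mix_iso. Qed.

Lemma mix_mx_dsum (M : 'M[R]_2) :
  mix_mx^T *m (\sum_(t < 2) block_inj t *m M *m (block_inj t)^T) *m mix_mx
  = (mixA R)^T *m M *m mixA R + (mixB R)^T *m M *m mixB R.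
Proof.
have mulA t : mix_mx^T *m (block_inj t *m M *m (block_inj t)^T) *m mix_mx
    = (mix_mx^T *m block_inj t) *m M *m ((block_inj t)^T *m mix_mx) by rewrite !mulmxA.
rewrite big_ord2 mulmxDr mulmxDl !mulA /mix_mx /block_inj /= !tr_col_mx !mul_row_col.
by rewrite !trmx1 !trmx0 !mulmx1 !mulmx0 !mul1mx !mul0mx !addr0 !add0r.
Qed.

Definition mix_dsum (y : 'M[E]_2) : 'M[E]_2 :=
  mxcomp mix_mx^T (\sum_(t < 2) mxcomp (block_inj t) y (block_inj t)^T) mix_mx.

Lemma map_lform_mix_dsum (h : E -> R) (y : 'M[E]_2) :
  (forall (a : R) x y, h (a *: x + y) = a * h x + h y) ->
  map_mx h (mix_dsum y)
  = (mixA R)^T *m map_mx h y *m mixA R + (mixB R)^T *m map_mx h y *m mixB R.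
Proof.
move=> hl; rewrite (map_lform_mxcomp hl) (map_lform_sum hl).
by under eq_bigr do rewrite (map_lform_mxcomp hl); rewrite mix_mx_dsum.
Qed.

Section AffineMap.
Hypothesis K_convex : nc_convex K.
Variable f : forall n, 'M[E]_n -> 'M[R]_n.
Arguments f : clear implicits.
Hypothesis f_affine : nc_affine K f.

Lemma affine_mix_dsum (y : 'M[E]_2) : K 2 y ->
  K 2 (mix_dsum y) /\
  f 2 (mix_dsum y) = (mixA R)^T *m f 2 y *m mixA R + (mixB R)^T *m f 2 y *m mixB R.
Proof.
have [Kdsum Kcomp] := K_convex; have [fdsum fcomp] := f_affine.
move=> Ky; have Kw := Kdsum (2 + 2)%N 2 (fun=> 2%N) (fun=> y) block_inj
  (fun=> Ky) block_inj_iso block_inj_partition.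
split; first exact: Kcomp mix_mx_iso Kw.
rewrite /mix_dsum (fcomp _ _ _ _ mix_mx_iso Kw).
by rewrite (fdsum _ _ _ _ _ (fun=> Ky) block_inj_iso block_inj_partition) mix_mx_dsum.
Qed.

Lemma affine_sym2 (y : 'M[E]_2) : K 2 y -> y ord0 ord_max = y ord_max ord0 ->
  f 2 y ord0 ord_max = f 2 y ord_max ord0.
Proof.
have [pl _ _] := pairing; have [_ fcomp] := f_affine.
move=> Ky ysym; have [Kz fz] := affine_mix_dsum Ky.
have z_diag : mxcomp (sign_mx R)^T (mix_dsum y) (sign_mx R) = mix_dsum y.
  apply: pairing_separates_mx => w; rewrite (map_lform_mxcomp (pl w)).
  apply: sign_mx_diag; rewrite (map_lform_mix_dsum _ (pl w));
  by have [e01 e10] := mix_offdiag (map_mx (pair w) y);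
    rewrite ?e01 ?e10 !mxE ysym subrr mulr0.
have := fcomp _ _ _ _ (sign_mx_iso R) Kz; rewrite z_diag fz => /sign_mx_fixed.
have [-> _] := mix_offdiag (f 2 y).
by move/eqP; rewrite mulf_eq0 invr_eq0 pnatr_eq0 subr_eq0 => /eqP.
Qed.

End AffineMap.

Lemma AK_trivial_involution_of_nc_symmetric :
  nc_convex K -> nc_symmetric K -> AK_trivial_involution pair K.
Proof.
move=> K_convex K_sym f [f_affine _] n k Kk; have [_ Kcomp] := K_convex.
have [_ fcomp] := f_affine.
apply/matrixP => i j; rewrite mxE; have [->|ij] := eqVneq i j; first by [].
pose g (s : 'I_2) : 'I_n := if s == ord0 then i else j.
have g_inj : injective g.
  by move=> s t; rewrite /g; case: (ord2P s) => ->; case: (ord2P t) => -> //= e;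
    move: ij; rewrite e eqxx.
have b_iso := coord_mx_iso g_inj.
have Ky := Kcomp _ _ _ _ b_iso Kk.
apply/esym; have := affine_sym2 K_convex f_affine Ky.
rewrite (fcomp _ _ _ _ b_iso Kk) !coord_mx_compressE /g /=; apply.
by have := congr1 (fun M : 'M[E]_2 => M ord_max ord0) (K_sym _ _ Ky); rewrite mxE.
Qed.

End NcConvexSymmetric.

(* MathComp only equips matrices over the scalar ring itself with a module
   structure; [M2 V] is ['M[V]_2] with entrywise scaling. *)
Section MatrixModule.
Variables (R : realType) (V : lmodType R).

Definition M2 := 'M[V]_2.
HB.instance Definition _ := GRing.Zmodule.on M2.

Definition M2_scale (a : R) (x : M2) : M2 := map_mx ( *:%R a) x.
Fact M2_scaleA a b x : M2_scale a (M2_scale b x) = M2_scale (a * b) x.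
Proof. by apply/matrixP => i j; rewrite !mxE scalerA. Qed.
Fact M2_scale1 : left_id 1 M2_scale.
Proof. by move=> x; apply/matrixP => i j; rewrite !mxE scale1r. Qed.
Fact M2_scaleDr : right_distributive M2_scale +%R.
Proof. by move=> a x y; apply/matrixP => i j; rewrite !mxE scalerDr. Qed.
Fact M2_scaleDl x : {morph M2_scale^~ x : a b / a + b}.
Proof. by move=> a b; apply/matrixP => i j; rewrite !mxE scalerDl. Qed.
HB.instance Definition _ :=
  GRing.Zmodule_isLmodule.Build R M2 M2_scaleA M2_scale1 M2_scaleDr M2_scaleDl.

End MatrixModule.

Section OperatorSystem.
Variables (R : realType) (V : lmodType R) (inv : V -> V).
Variable cone : forall n, 'M[V]_n -> Prop.
Arguments cone : clear implicits.
Variable e : V.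
Hypothesis inv_linear : forall (a : R) (u v : V), inv (a *: u + v) = a *: inv u + inv v.
Hypothesis invK : forall v, inv (inv v) = v.
Hypothesis cone_sa : forall n x, cone n x -> sa_mx inv x.
Hypothesis coneD : forall n x y, cone n x -> cone n y -> cone n (x + y).
Hypothesis coneZ : forall n (r : R) x, 0 <= r -> cone n x -> cone n (map_mx (fun v => r *: v) x).
Hypothesis cone_antisym : forall n x, cone n x -> cone n (- x) -> x = 0.
Hypothesis cone_compress : forall m n (a : 'M[R]_(n, m)) x, cone n x -> cone m (mxcomp a^T x a).
Hypothesis cone_archimedean : forall n x, sa_mx inv x ->
  exists r : R, 0 < r /\ cone n (unit_mx (r *: e) n + x).
Hypothesis cone_archimedean_closed : forall n x, sa_mx inv x ->
  (forall r : R, 0 < r -> cone n (unit_mx (r *: e) n + x)) -> cone n x.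

HB.instance Definition _ := GRing.isLinear.Build R V V *:%R inv inv_linear.

Lemma inv0 : inv 0 = 0. Proof. exact: raddf0. Qed.
Lemma invD u v : inv (u + v) = inv u + inv v. Proof. exact: raddfD. Qed.
Lemma invN u : inv (- u) = - inv u. Proof. exact: raddfN. Qed.
Lemma invB u v : inv (u - v) = inv u - inv v. Proof. exact: raddfB. Qed.
Lemma invZ a u : inv (a *: u) = a *: inv u. Proof. exact: linearZ. Qed.

Lemma sa_mxE n (x : 'M[V]_n) i j : sa_mx inv x -> inv (x j i) = x i j.
Proof. by move=> /(congr1 (fun M : 'M[V]_n => M i j)); rewrite !mxE. Qed.

Lemma sa_mxP n (x : 'M[V]_n) : (forall i j, inv (x j i) = x i j) -> sa_mx inv x.
Proof. by move=> h; apply/matrixP => i j; rewrite !mxE h. Qed.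

Lemma sa_mx0 n : sa_mx inv (0 : 'M[V]_n).
Proof. by apply: sa_mxP => i j; rewrite !mxE inv0. Qed.

Lemma inv_unit : inv e = e.
Proof.
have [r [r_gt0 c]] := cone_archimedean (sa_mx0 1).
have := sa_mxE ord0 ord0 (cone_sa c); rewrite !mxE eqxx addr0 invZ => /eqP.
by rewrite -subr_eq0 -scalerBr scaler_eq0 gt_eqF // subr_eq0 => /eqP.
Qed.

Lemma cone2Z (r : R) (x : M2 V) : 0 <= r -> cone 2 x -> cone 2 (r *: x).
Proof. exact: coneZ. Qed.

Lemma sa_matrix2 a b c d : inv a = a -> inv b = c -> inv d = d ->
  sa_mx inv (matrix2 a b c d).
Proof.
move=> ha hb hd; apply: sa_mxP => i j.
by case: (ord2P i) => ->; case: (ord2P j) => ->; rewrite !mxE /= -?hb ?invK.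
Qed.

Lemma mxcomp2E (P Q : 'M[R]_2) (x : 'M[V]_2) i j :
  mxcomp P x Q i j =
    (P i ord0 * Q ord0 j) *: x ord0 ord0 + (P i ord0 * Q ord_max j) *: x ord0 ord_max
  + (P i ord_max * Q ord0 j) *: x ord_max ord0 + (P i ord_max * Q ord_max j) *: x ord_max ord_max.
Proof. by rewrite mxE !big_ord2 addrA. Qed.

Definition sa_part (x : M2 V) : M2 V := \matrix_(i, j) ((2^-1 : R) *: (x i j + inv (x j i))).

Fact sa_part_linear : linear sa_part.
Proof.
move=> k x y; apply/matrixP => i j; rewrite !mxE invD invZ.
by rewrite scalerA mulrC -scalerA -scalerDr addrACA -scalerDr.
Qed.
HB.instance Definition _ := GRing.isLinear.Build R (M2 V) (M2 V) *:%R sa_part sa_part_linear.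

Lemma sa_partE x : sa_mx inv x -> sa_part x = x.
Proof.
move=> h; apply/matrixP => i j; rewrite !mxE (sa_mxE _ _ h).
by rewrite -mulr2n -scaler_nat scalerA mulVf ?scale1r // pnatr_eq0.
Qed.

Lemma sa_mx_sa_part x : sa_mx inv (sa_part x).
Proof. by apply: sa_mxP => i j; rewrite !mxE invZ invD invK addrC. Qed.

(* Forgetting the involution, [M2 V] is a real ordered vector space with
   positive cone [pos2] and order unit [unit2]: the setting of the Riesz
   extension theorem. *)
Definition pos2 (x : M2 V) := cone 2 (sa_part x).

Definition unit2 : M2 V := matrix2 e 0 0 e.

Lemma unit_mx2E (r : R) : unit_mx (r *: e) 2 = r *: unit2 :> M2 V.
Proof. by apply: matrix2P; rewrite !mxE /= ?scaler0. Qed.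

Lemma cone_unit2 : cone 2 unit2.
Proof.
have [r [r_gt0 c]] := cone_archimedean (sa_mx0 2).
have -> : unit2 = r^-1 *: (unit_mx (r *: e) 2 + 0 : M2 V).
  by rewrite addr0 unit_mx2E scalerA mulVf ?gt_eqF ?scale1r.
by apply: cone2Z => //; rewrite invr_ge0 ltW.
Qed.

Lemma pos2_0 : pos2 0.
Proof. by rewrite /pos2 raddf0 -(scale0r unit2); apply: cone2Z cone_unit2. Qed.

Lemma pos2D x y : pos2 x -> pos2 y -> pos2 (x + y).
Proof. by rewrite /pos2 raddfD; exact: coneD. Qed.

Lemma pos2Z r x : 0 <= r -> pos2 x -> pos2 (r *: x).
Proof. by rewrite /pos2 linearZ; exact: cone2Z. Qed.

Lemma pos2_unit (x : M2 V) : exists r : R, pos2 (r *: unit2 - x).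
Proof.
have sa_x : sa_mx inv (- sa_part x).
  apply: sa_mxP => i j; rewrite [(- sa_part x) j i]mxE [(- sa_part x) i j]mxE invN.
  by rewrite (sa_mxE _ _ (sa_mx_sa_part x)).
have [r [r_gt0 c]] := cone_archimedean sa_x.
exists r; rewrite /pos2 linearB linearZ /= (@sa_partE unit2) -?unit_mx2E //.
by apply: sa_matrix2; rewrite ?inv0 ?inv_unit.
Qed.

Section SkewVector.
Variable w : V.
Hypothesis w_skew : inv w = - w.
Hypothesis w_neq0 : w != 0.

Definition test_mx (a d g b : R) : M2 V :=
  matrix2 (a *: e) (g *: e + b *: w) (g *: e - b *: w) (d *: e).

Lemma test_mx_linear k a d g b a' d' g' b' :
  k *: test_mx a d g b + test_mx a' d' g' b'
  = test_mx (k * a + a') (k * d + d') (k * g + g') (k * b + b').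
Proof.
apply: eq_matrix2; rewrite !mxE /= ?scalerDr ?scalerBr ?scalerA ?scalerDl //.
- by rewrite addrACA.
- by rewrite scalerN scalerA opprD addrACA.
Qed.

Lemma test_mxZ r a d g b : r *: test_mx a d g b = test_mx (r * a) (r * d) (r * g) (r * b).
Proof.
rewrite -[LHS]addr0; have -> : 0 = test_mx 0 0 0 0.
  by rewrite /test_mx; apply: eq_matrix2; rewrite !mxE /= ?scale0r ?addr0 ?subr0.
by rewrite test_mx_linear !addr0.
Qed.

Lemma test_mx_unit2 : test_mx 1 1 0 0 = unit2.
Proof. by apply/esym; apply: eq_matrix2; rewrite !mxE /= ?scale1r ?scale0r ?addr0 ?subr0. Qed.

Lemma sa_test_mx a d g b : sa_mx inv (test_mx a d g b).
Proof.
by apply: sa_matrix2; rewrite ?invD ?invN ?invZ ?inv_unit ?w_skew ?scalerN ?opprK.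
Qed.

Lemma pos2_test_mx a d g b : pos2 (test_mx a d g b) <-> cone 2 (test_mx a d g b).
Proof. by rewrite /pos2 sa_partE //; exact: sa_test_mx. Qed.

Ltac simp_coef := do 3 rewrite ?mulr1 ?mul1r ?mulr0 ?mul0r ?mulrN ?mulNr ?mulrNN
  ?scale0r ?scale1r ?scaleN1r ?addr0 ?add0r ?subr0 ?sub0r ?opprD ?scaleNr ?opprK ?oppr0.

Lemma test_mx_sign a d g b : mxcomp (sign_mx R)^T (test_mx a d g b) (sign_mx R) = test_mx a d (- g) (- b).
Proof.
rewrite {2}/test_mx; apply: eq_matrix2; rewrite !mxcomp2E !mxE /=; simp_coef; try done;
by rewrite ?scaleNr ?opprK ?addrC.
Qed.

Lemma test_mx_rot90 a d g b : mxcomp (rot90_mx R)^T (test_mx a d g b) (rot90_mx R) = test_mx d a (- g) b.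
Proof.
rewrite {2}/test_mx; apply: eq_matrix2; rewrite !mxcomp2E !mxE /=; simp_coef; try done;
by rewrite ?scaleNr ?opprK ?addrC.
Qed.

(* Conjugation by [sign_mx] maps [test_mx 0 0 0 1] to its opposite. *)
Lemma test_mx_skew_not_cone : ~ cone 2 (test_mx 0 0 0 1).
Proof.
move=> c; have := cone_compress (sign_mx R) c; rewrite test_mx_sign.
have -> : test_mx 0 0 (- 0) (- 1) = - test_mx 0 0 0 1.
  by rewrite -scaleN1r test_mxZ !mulr0 mulr1 oppr0.
move=> /(cone_antisym c)/(congr1 (fun M : 'M[V]_2 => M ord0 ord_max)).
by rewrite !mxE /= scale0r add0r scale1r => w0; move: w_neq0; rewrite w0 eqxx.
Qed.

Lemma exists_gap : exists t : R, 0 < t /\ ~ cone 2 (test_mx t t 0 1).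
Proof.
apply: contrapT => no_gap; apply: test_mx_skew_not_cone.
apply: cone_archimedean_closed; first exact: sa_test_mx.
move=> r r_gt0; apply: contrapT => nc; apply: no_gap; exists r; split => //.
by rewrite unit_mx2E -test_mx_unit2 test_mx_linear !(mulr1, mulr0, addr0, add0r) in nc.
Qed.

Section Gap.
Variable t : R.
Hypothesis t_gt0 : 0 < t.
Hypothesis t_gap : ~ cone 2 (test_mx t t 0 1).

Lemma cone_test_mx_scalar l : 0 <= l -> cone 2 (test_mx l l 0 0).
Proof.
move=> l_ge0; have := cone2Z l_ge0 cone_unit2.
by rewrite -test_mx_unit2 test_mxZ mulr1 mulr0.
Qed.

Lemma cone_test_mx_shift a b l : cone 2 (test_mx a a 0 b) -> cone 2 (test_mx l l 0 0) ->
  cone 2 (test_mx (a + l) (a + l) 0 b).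
Proof.
move=> ca cl; have := coneD ca cl.
by rewrite -[X in cone 2 (X + _)]scale1r test_mx_linear !mul1r !addr0.
Qed.

Lemma cone_test_mx_bound S c : cone 2 (test_mx S S 0 c) -> cone 2 (test_mx S S 0 (- c)) ->
  `|c| * t <= S.
Proof.
move=> c1 c2; have cc : cone 2 (test_mx S S 0 `|c|) by case: (ler0P c).
rewrite leNgt; apply/negP => lt_S; apply: t_gap.
have [c0|c_neq0] := eqVneq `|c| 0.
- rewrite c0 mul0r in lt_S; rewrite c0 in cc.
  have [r [_ cr]] := cone_archimedean (sa_test_mx 0 0 0 1).
  rewrite unit_mx2E -test_mx_unit2 test_mx_linear !(mulr1, mulr0, addr0, add0r) in cr.
  rewrite -(subrK r t) addrC; apply: cone_test_mx_shift cr _.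
  have [r_le_t|t_lt_r] := lerP r t; first by apply: cone_test_mx_scalar; rewrite subr_ge0.
  have := cone2Z (r := (t - r) / S) _ cc; rewrite test_mxZ mulr0 divfK ?lt_eqF //.
  by apply; rewrite mulr_le0 // ?invr_le0 ?ltW //; lra.
- have c_gt0 : 0 < `|c| by rewrite lt_def c_neq0 normr_ge0.
  have c_inv_ge0 : 0 <= `|c|^-1 by rewrite invr_ge0 ltW.
  have := cone2Z c_inv_ge0 cc; rewrite test_mxZ mulr0 mulVf // => cS.
  rewrite -(subrK (`|c|^-1 * S) t) addrC; apply: cone_test_mx_shift cS _.
  by apply: cone_test_mx_scalar; rewrite subr_ge0 ler_pdivrMl // ltW // mulrC.
Qed.

Definition test_graph : M2 V * R -> Prop :=
  fun p => exists a d g b, p = (test_mx a d g b, a + d + b * t).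

Lemma test_graph_linear : graph_linear test_graph.
Proof.
move=> x a y b k [a1 [d1 [g1 [b1 [-> ->]]]]] [a2 [d2 [g2 [b2 [-> ->]]]]].
exists (k * a1 + a2), (k * d1 + d2), (k * g1 + g2), (k * b1 + b2).
by rewrite test_mx_linear; congr (_, _); ring.
Qed.

(* Conjugating by [rot90_mx] and [sign_mx] and adding gives both
   [test_mx (a+d) (a+d) 0 (2b)] and [test_mx (a+d) (a+d) 0 (-2b)]. *)
Lemma test_graph_positive : graph_positive pos2 test_graph.
Proof.
move=> x v [a [d [g [b [-> ->]]]]] /pos2_test_mx c.
have := coneD c (cone_compress (rot90_mx R) c).
rewrite test_mx_rot90 -[X in cone 2 (X + _)]scale1r test_mx_linear.
have -> : test_mx (1 * a + d) (1 * d + a) (1 * g + - g) (1 * b + b)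
  = test_mx (a + d) (a + d) 0 (b + b) by congr test_mx; ring.
move=> cS; have := cone_compress (sign_mx R) cS; rewrite test_mx_sign oppr0.
move=> /(cone_test_mx_bound cS) bound.
have := ler_norm (- (b + b)); rewrite normrN => hn.
have p1 : 0 <= `|b + b| * t by apply: mulr_ge0; [exact: normr_ge0 | exact: ltW].
have p2 : 0 <= (`|b + b| + (b + b)) * t by apply: mulr_ge0; [lra | exact: ltW].
rewrite !mulrDl in p2; lra.
Qed.

End Gap.

Definition vdelta (i j : 'I_2) (v : V) : M2 V := \matrix_(k, l) (if (k == i) && (l == j) then v else 0).

Lemma vdelta_linear i j : linear (vdelta i j).
Proof. by move=> a u v; apply/matrixP => k l; rewrite !mxE; case: ifP; rewrite ?scaler0 ?addr0. Qed.

Lemma vdelta_sum (x : M2 V) : x = \sum_(i < 2) \sum_(j < 2) vdelta i j (x i j).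
Proof.
apply/matrixP => k l; rewrite summxE; under eq_bigr do rewrite summxE.
rewrite !big_ord2 !mxE.
by case: (ord2P k) => ->; case: (ord2P l) => -> /=; rewrite ?addr0 ?add0r.
Qed.

Section FromFunctional.
Variable t : R.
Hypothesis t_gt0 : 0 < t.
Variable s : M2 V -> R.
Hypothesis s_linear : forall (k : R) x y, s (k *: x + y) = k * s x + s y.
Hypothesis s_pos : forall x, pos2 x -> 0 <= s x.
Hypothesis s_test : forall a d g b, s (test_mx a d g b) = a + d + b * t.

Let s_vdelta_linear i j a u v :
  s (vdelta i j (a *: u + v)) = a * s (vdelta i j u) + s (vdelta i j v).
Proof. by rewrite vdelta_linear s_linear. Qed.

Lemma s_sa_part0 z : sa_part z = 0 -> s z = 0.
Proof.
move=> z0; have s_ge0 y : sa_part y = 0 -> 0 <= s y.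
  by move=> y0; apply: s_pos; rewrite /pos2 y0 -(raddf0 sa_part); exact: pos2_0.
have h1 := s_ge0 z z0.
have h2 : 0 <= s (- z) by apply: s_ge0; rewrite linearN /= z0 oppr0.
by apply/eqP; rewrite eq_le h1 andbT -oppr_ge0 -(lformN s_linear).
Qed.

Lemma s_vdelta_inv i j v : s (vdelta i j (inv v)) = s (vdelta j i v).
Proof.
apply/eqP; rewrite eq_sym -subr_eq0 -(lformB s_linear); apply/eqP/s_sa_part0.
apply/matrixP => k l; rewrite !mxE (andbC (l == j)) (andbC (l == i)).
case: ((k == j) && (l == i)); case: ((k == i) && (l == j));
by rewrite ?invB ?invN ?invK ?inv0 ?subr0 ?sub0r ?addr0 ?subrr ?addrA ?subrK ?subrr ?addNr ?scaler0.
Qed.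

Definition entry_map (v : V) : 'M[R]_2 := \matrix_(i, j) s (vdelta i j v).

Lemma entry_map_linear a u v : entry_map (a *: u + v) = a *: entry_map u + entry_map v.
Proof. by apply/matrixP => i j; rewrite !mxE s_vdelta_linear. Qed.

Lemma entry_map_unit : entry_map e = 1%:M.
Proof.
have s00 : s (vdelta ord0 ord0 e) = 1.
  rewrite (_ : vdelta _ _ _ = test_mx 1 0 0 0) ?s_test; first by ring.
  by apply: eq_matrix2; rewrite !mxE /= ?scale1r ?scale0r ?addr0 ?subr0.
have s11 : s (vdelta ord_max ord_max e) = 1.
  rewrite (_ : vdelta _ _ _ = test_mx 0 1 0 0) ?s_test; first by ring.
  by apply: eq_matrix2; rewrite !mxE /= ?scale1r ?scale0r ?addr0 ?subr0.
have s01 : s (vdelta ord0 ord_max e) + s (vdelta ord_max ord0 e) = 0.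
  rewrite -(lformD s_linear) (_ : _ + _ = test_mx 0 0 1 0) ?s_test; first by ring.
  by apply: eq_matrix2; rewrite !mxE /= ?scale1r ?scale0r ?addr0 ?subr0 ?add0r.
have := s_vdelta_inv ord0 ord_max e; rewrite inv_unit => s_sym.
have s01_0 : s (vdelta ord0 ord_max e) = 0.
  by move: s01; rewrite -s_sym -mulr2n => /eqP; rewrite mulrn_eq0 => /eqP.
by apply: matrix2P; rewrite !mxE /= ?s00 ?s11 -?s_sym ?s01_0.
Qed.

Definition rows_of m (xi : 'I_m -> 'cV[R]_2) : 'M[R]_(m, 2) := \matrix_(p, i) xi p i ord0.

Lemma s_compress m (x : 'M[V]_m) (xi : 'I_m -> 'cV[R]_2) :
  s (mxcomp (rows_of xi)^T x (rows_of xi))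
  = \sum_(p < m) \sum_(q < m) ((xi p)^T *m entry_map (x p q) *m xi q) 0 0.
Proof.
rewrite {1}(vdelta_sum (mxcomp _ x _)) (lform_sum s_linear).
under eq_bigr do rewrite (lform_sum s_linear).
under eq_bigr do under eq_bigr do rewrite mxE (lform_sum (s_vdelta_linear _ _)).
under eq_bigr do under eq_bigr do under eq_bigr do rewrite (lform_sum (s_vdelta_linear _ _)).
under eq_bigr do under eq_bigr do under eq_bigr do under eq_bigr do
  rewrite (lformZ (s_vdelta_linear _ _)).
under [RHS]eq_bigr do under eq_bigr do rewrite mxE.
under [RHS]eq_bigr do under eq_bigr do under eq_bigr do rewrite mxE big_distrl.
under [RHS]eq_bigr do under eq_bigr do rewrite exchange_big.
under [LHS]eq_bigr do rewrite exchange_big.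
under [LHS]eq_bigr do under eq_bigr do rewrite exchange_big.
rewrite exchange_big; under [LHS]eq_bigr do rewrite exchange_big.
apply: eq_bigr => p _; apply: eq_bigr => q _; apply: eq_bigr => i _; apply: eq_bigr => j _.
by rewrite !mxE /= mulrAC; congr (_ * _ * _).
Qed.

Lemma entry_map_cp m (x : 'M[V]_m) : cone m x -> block_psd (fun p q => entry_map (x p q)).
Proof.
move=> cx; split.
  move=> p q; apply/matrixP => i j; rewrite !mxE.
  by rewrite -(sa_mxE q p (cone_sa cx)) s_vdelta_inv.
move=> xi; have c := cone_compress (rows_of xi) cx.
by rewrite -s_compress; apply: s_pos; rewrite /pos2 sa_partE //; exact: cone_sa c.
Qed.

Lemma entry_map_ucp : ucp cone e entry_map.
Proof. by split; [exact: entry_map_linear | exact: entry_map_unit | exact: entry_map_cp]. Qed.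

Lemma entry_map_asym : (entry_map w)^T <> entry_map w.
Proof.
move=> /(congr1 (fun M : 'M[R]_2 => M ord_max ord0)); rewrite !mxE => s_sym.
have skew : vdelta ord0 ord_max w - vdelta ord_max ord0 w = test_mx 0 0 0 1.
  by apply: eq_matrix2; rewrite !mxE /= ?scale1r ?scale0r ?addr0 ?subr0 ?add0r ?sub0r ?oppr0.
have := congr1 s skew; rewrite (lformB s_linear) s_sym subrr s_test mul1r !add0r.
by move=> t0; move: t_gt0; rewrite -t0 ltxx.
Qed.

End FromFunctional.

Lemma exists_ucp_asym : exists n (phi : V -> 'M[R]_n), ucp cone e phi /\ (phi w)^T <> phi w.
Proof.
have [t [t_gt0 t_gap]] := exists_gap.
have unit_graph : test_graph t (unit2, 2).
  by exists 1, 1, 0, 0; rewrite test_mx_unit2 mul0r addr0.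
have [s [s_linear s_pos s_graph]] := riesz_extension pos2D pos2Z pos2_0 pos2_unit
  (@test_graph_linear t) (test_graph_positive t_gt0 t_gap) unit_graph.
have s_test a d g b : s (test_mx a d g b) = a + d + b * t by apply: s_graph; exists a, d, g, b.
exists 2%N, (entry_map s); split; first exact: entry_map_ucp.
exact: (entry_map_asym t_gt0 s_linear s_test).
Qed.

End SkewVector.

Lemma ucp_sym_of_trivial_involution : trivial_involution inv ->
  forall n (phi : V -> 'M[R]_n), ucp cone e phi -> forall v, (phi v)^T = phi v.
Proof.
move=> triv n phi [phi_linear phi_unit phi_cp] v.
pose x : 'M[V]_1 := \matrix_(i, j) v.
have sa_x : sa_mx inv x by apply/matrixP => i j; rewrite !mxE triv.
have [r [r_gt0 c]] := cone_archimedean sa_x.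
have [sym _] := phi_cp 1%N _ c; have := sym ord0 ord0.
rewrite !mxE eqxx phi_linear phi_unit => h.
by apply: (addrI (r *: 1%:M)); rewrite -[in RHS]h raddfD /= linearZ /= trmx1.
Qed.

Lemma trivial_involution_of_ucp_sym :
  (forall n (phi : V -> 'M[R]_n), ucp cone e phi -> forall v, (phi v)^T = phi v) ->
  trivial_involution inv.
Proof.
move=> ucp_sym v; apply/eqP; rewrite eq_sym -subr_eq0; apply/negPn/negP => w_neq0.
have w_skew : inv (v - inv v) = - (v - inv v) by rewrite invB invK opprB.
have [n [phi [phi_ucp]]] := exists_ucp_asym w_skew w_neq0.
by apply; exact: ucp_sym phi_ucp _.
Qed.

End OperatorSystem.

Theorem corollary4p3 (R : realType) :
  (forall (E F : lmodType R) (pair : F -> E -> R)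
          (K : forall n, 'M[E]_n -> Prop),
     dual_pairing pair -> compact_nc_convex pair K ->
     (AK_trivial_involution pair K <-> nc_symmetric K))
  /\
  (forall (V : lmodType R) (inv : V -> V) (cone : forall n, 'M[V]_n -> Prop) (e : V),
     real_opsys inv cone e ->
     (trivial_involution inv <->
      forall (n : nat) (phi : V -> 'M[R]_n), ucp cone e phi ->
        forall v : V, (phi v)^T = phi v)).
Proof.
split.
- move=> E F pair K pairing [K_convex _]; split.
  + exact: nc_symmetric_of_AK_trivial_involution.
  + exact: AK_trivial_involution_of_nc_symmetric.
- move=> V inv cone e [[inv_linear invK cone_sa coneD coneZ]
    [cone_antisym cone_compress cone_archimedean cone_archimedean_closed]].
  by split; [apply: ucp_sym_of_trivial_involution | apply: trivial_involution_of_ucp_sym].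
Qed.
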